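(* For every $\eta\ge0$ define \[ L_{\Phi,\eta}:=\max_{\pi\in\Theta}\|M_\pi+\eta I\|_2. \] Then \[ \rho^{\mathrm{dir}}_{\alpha,\eta}\le\sqrt{1-2\alpha(c_\Phi+\eta)+\alpha^2L_{\Phi,\eta}^2}. \] Since $L_{\Phi,\eta}\le L_\Phi+\eta$, also \[ \rho^{\mathrm{dir}}_{\alpha,\eta}\le\sqrt{1-2\alpha(c_\Phi+\eta)+\alpha^2(L_\Phi+\eta)^2}. \] Hence, if $c_\Phi+\eta>0$ and $0<\alpha<2(c_\Phi+\eta)/L_{\Phi,\eta}^2$, then $\rho^{\mathrm{dir}}_{\alpha,\eta}<1$. The same conclusion holds if $c_\Phi+\eta>0$ and $0<\alpha<2(c_\Phi+\eta)/(L_\Phi+\eta)^2$.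
   Context: Consider a finite discounted MDP with state space $\mathcal S=\{1,\dots,|\mathcal S|\}$, action space $\mathcal A=\{1,\dots,|\mathcal A|\}$, transition probabilities $P(s'\mid s,a)$, and discount factor $\gamma\in(0,1)$. State-action vectors are ordered as $(1,1),(2,1),\dots,(|\mathcal S|,1),(1,2),\dots$. The matrix $P\in\mathbb R^{|\mathcal S||\mathcal A|\times|\mathcal S|}$ has rows $P(\cdot\mid s,a)$. The set $\Theta$ is the finite set of deterministic stationary policies $\pi:\mathcal S\to\mathcal A$. For $\pi\in\Theta$, $\Pi^\pi$ has entry $1$ at row $s$, column $(s,\pi(s))$, and zeros elsewhere. The feature matrix $\Phi\in\mathbb R^{|\mathcal S||\mathcal A|\times m}$ has full column rank. The distribution $d>0$ on $\mathcal S\times\mathcal A$ gives $D=\mathrm{diag}(d)$. The step size is $\alpha\in(0,1)$ and the regularization weight is $\eta\ge0$. Let $M_\pi:=\Phi^\top D\Phi-\gamma\Phi^\top DP\Pi^\pi\Phi$. Define \[ c_\Phi:=\min_{\pi\in\Theta}\lambda_{\min}\big((M_\pi+M_\pi^\top)/2\big),\qquad L_\Phi:=\max_{\pi\in\Theta}\|M_\pi\|_2. \] For $\pi\in\Theta$, define $A^\eta_\pi:=I-\alpha(M_\pi+\eta I)$, and let $\rho^{\mathrm{dir}}_{\alpha,\eta}$ be the joint spectral radius $\lim_k\max_{\pi_i\in\Theta}\|A^\eta_{\pi_k}\cdots A^\eta_{\pi_1}\|^{1/k}$ of $\{A^\eta_\pi:\pi\in\Theta\}$. *)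

From HB Require Import structures.
From mathcomp Require Import all_boot all_order all_algebra.
From mathcomp Require Import all_classical all_reals all_analysis.
Set Implicit Arguments. Unset Strict Implicit. Unset Printing Implicit Defensive.
Import Order.TTheory GRing.Theory Num.Theory.
Local Open Scope classical_set_scope.
Local Open Scope ring_scope.

Section Defs.
Variable R : realType.

Definition vnorm2 (n : nat) (x : 'cV[R]_n) : R :=
  Num.sqrt (\sum_(i < n) (x i 0) ^+ 2).

Definition opnorm2 (n p : nat) (A : 'M[R]_(n, p)) : R :=
  sup [set vnorm2 (A *m x) | x in [set x : 'cV[R]_p | vnorm2 x <= 1]].

(* Smallest (real) eigenvalue of a square matrix (used on symmetric ones,
   whose eigenvalues are all real). *)
Definition lambda_min (n : nat) (S : 'M[R]_n) : R :=
  inf [set a : R | eigenvalue S a].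

Definition policy (nS nA : nat) := {ffun 'I_nS -> 'I_nA}.

(* Index of the state-action pair (s,a) in the ordering
   (1,1),(2,1),...,(|S|,1),(1,2),... : it is a*|S| + s. *)
Definition sa_idx (nS nA : nat) (s : 'I_nS) (a : 'I_nA) : 'I_(nA * nS) :=
  mxvec_index a s.

Definition Pimx (nS nA : nat) (pi : policy nS nA) : 'M[R]_(nS, nA * nS) :=
  \matrix_(s < nS, j < nA * nS) (j == sa_idx s (pi s))%:R.

Definition Mpi (nS nA m : nat) (Phi : 'M[R]_(nA * nS, m))
  (d : 'rV[R]_(nA * nS)) (P : 'M[R]_(nA * nS, nS)) (gamma : R)
  (pi : policy nS nA) : 'M[R]_m :=
  Phi^T *m diag_mx d *m Phi - gamma *: (Phi^T *m diag_mx d *m P *m Pimx pi *m Phi).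

Definition jsr (I : finType) (m : nat) (A : I -> 'M[R]_m) : R :=
  lim ((fun k : nat =>
     (sup [set opnorm2 (\prod_(j < k.+1) A (f (rev_ord j))) |
             f in [set: 'I_k.+1 -> I]]) `^ (k.+1%:R)^-1) @ \oo).

End Defs.

(* For B := M_pi + eta I and x a unit vector,
     |(I - alpha B) x|^2 = 1 - 2 alpha x'Bx + alpha^2 |Bx|^2,
   where x'Bx = x'M_pi x + eta >= c_Phi + eta and |Bx| <= L_{Phi,eta}.  So every
   A^eta_pi has spectral norm at most q := sqrt(1 - 2 alpha (c_Phi + eta) + alpha^2 L_{Phi,eta}^2),
   a product of k of them has norm at most q^k, and the joint spectral radius is at most q.
   The one non-elementary step is that lambda_min of a symmetric matrix S bounds its
   Rayleigh quotient from below.  Without the spectral theorem, we show that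
   mu := inf_{|x| = 1} x'Sx is itself an eigenvalue: otherwise T := S - mu I is invertible
   and positive semidefinite, hence |x|^2 <= K x'Tx for some K > 0, which keeps x'Sx
   above mu + 1/K on the unit sphere. *)

From HB Require Import structures.
From mathcomp Require Import all_boot all_order all_algebra.
From mathcomp Require Import all_classical all_reals all_analysis.
From mathcomp Require Import lra.
Import Order.TTheory GRing.Theory Num.Theory.
Local Open Scope classical_set_scope.
Local Open Scope ring_scope.
Set Implicit Arguments. Unset Strict Implicit. Unset Printing Implicit Defensive.

Section EuclideanSpace.
Variable R : realType.
Implicit Types (n p : nat).

Definition dot n (x y : 'cV[R]_n) : R := \sum_i x i 0 * y i 0.

Lemma dotC n (x y : 'cV[R]_n) : dot x y = dot y x.
Proof. by apply: eq_bigr => i _; rewrite mulrC. Qed.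

Lemma dotDr n (x y z : 'cV[R]_n) : dot x (y + z) = dot x y + dot x z.
Proof. by rewrite /dot -big_split; apply: eq_bigr => i _; rewrite mxE mulrDr. Qed.

Lemma dotZr n a (x y : 'cV[R]_n) : dot x (a *: y) = a * dot x y.
Proof. by rewrite /dot mulr_sumr; apply: eq_bigr => i _; rewrite mxE mulrCA. Qed.

Lemma dotBr n (x y z : 'cV[R]_n) : dot x (y - z) = dot x y - dot x z.
Proof. by rewrite dotDr -scaleN1r dotZr mulN1r. Qed.

Lemma dotDl n (x y z : 'cV[R]_n) : dot (y + z) x = dot y x + dot z x.
Proof. by rewrite dotC dotDr !(dotC x). Qed.

Lemma dotZl n a (x y : 'cV[R]_n) : dot (a *: y) x = a * dot y x.
Proof. by rewrite dotC dotZr dotC. Qed.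

Lemma dotBl n (x y z : 'cV[R]_n) : dot (y - z) x = dot y x - dot z x.
Proof. by rewrite dotC dotBr !(dotC x). Qed.

Lemma dot0r n (x : 'cV[R]_n) : dot x 0 = 0.
Proof. by rewrite /dot big1 // => i _; rewrite mxE mulr0. Qed.

Lemma dot_mulmxr n p (A : 'M[R]_(n, p)) x y : dot x (A *m y) = dot (A^T *m x) y.
Proof.
rewrite /dot; under eq_bigr => i _ do rewrite mxE mulr_sumr.
rewrite exchange_big /=; apply: eq_bigr => j _.
by rewrite mxE mulr_suml; apply: eq_bigr => i _; rewrite mxE mulrCA mulrA.
Qed.

Lemma dot_ge0 n (x : 'cV[R]_n) : 0 <= dot x x.
Proof. by apply: sumr_ge0 => i _; rewrite -expr2 sqr_ge0. Qed.

Lemma dot_eq0 n (x : 'cV[R]_n) : (dot x x == 0) = (x == 0).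
Proof.
apply/eqP/eqP => [x0|->]; last exact: dot0r.
apply/matrixP => i j; rewrite ord1 mxE.
have nneg k : xpredT k -> 0 <= x k 0 * x k 0 by rewrite -expr2 sqr_ge0.
move: x0 => /(psumr_eq0P nneg)/(_ i isT)/eqP.
by rewrite mulf_eq0 orbb => /eqP.
Qed.

Lemma dot_gt0 n (x : 'cV[R]_n) : x != 0 -> 0 < dot x x.
Proof. by rewrite lt_def dot_eq0 dot_ge0 andbT. Qed.

Lemma vnorm2E n (x : 'cV[R]_n) : vnorm2 x = Num.sqrt (dot x x).
Proof. by congr Num.sqrt; apply: eq_bigr => i _; rewrite expr2. Qed.

Lemma vnorm2_ge0 n (x : 'cV[R]_n) : 0 <= vnorm2 x.
Proof. exact: sqrtr_ge0. Qed.

Lemma vnorm2_sqr n (x : 'cV[R]_n) : vnorm2 x ^+ 2 = dot x x.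
Proof. by rewrite vnorm2E sqr_sqrtr // dot_ge0. Qed.

Lemma vnorm2_eq0 n (x : 'cV[R]_n) : (vnorm2 x == 0) = (x == 0).
Proof. by rewrite -sqrf_eq0 vnorm2_sqr dot_eq0. Qed.

Lemma vnorm2Z n a (x : 'cV[R]_n) : vnorm2 (a *: x) = `|a| * vnorm2 x.
Proof.
by rewrite !vnorm2E dotZl dotZr mulrA -expr2 sqrtrM ?sqr_ge0 // sqrtr_sqr.
Qed.

Lemma vnorm2_le_sqrt n p k (x : 'cV[R]_n) (y : 'cV[R]_p) :
  dot x x <= k * dot y y -> vnorm2 x <= Num.sqrt k * vnorm2 y.
Proof.
move=> le_xy; rewrite vnorm2E; apply: le_trans (ler_wsqrtr le_xy) _.
have [k0|k0] := leP 0 k; first by rewrite sqrtrM // vnorm2E.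
by rewrite ler0_sqrtr ?mulr_ge0 ?sqrtr_ge0 // nmulr_rle0 ?dot_ge0.
Qed.

Lemma dot_sqr_le n (x y : 'cV[R]_n) : dot x y ^+ 2 <= dot x x * dot y y.
Proof.
have [->|x0] := eqVneq x 0; first by rewrite dotC !dot0r expr0n mul0r.
have xx0 := dot_gt0 x0.
have := dot_ge0 (dot x x *: y - dot x y *: x).
rewrite !(dotBl, dotBr, dotZl, dotZr) (dotC y x) => h.
suff : 0 <= dot x x * (dot x x * dot y y - dot x y ^+ 2) by rewrite pmulr_rge0 ?subr_ge0.
lra.
Qed.

Lemma normr_dot_le n (x y : 'cV[R]_n) : `|dot x y| <= vnorm2 x * vnorm2 y.
Proof.
rewrite !vnorm2E -sqrtrM ?dot_ge0 // -sqrtr_sqr.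
by rewrite ler_sqrt ?mulr_ge0 ?dot_ge0 // dot_sqr_le.
Qed.

Lemma vnorm2D n (x y : 'cV[R]_n) : vnorm2 (x + y) <= vnorm2 x + vnorm2 y.
Proof.
rewrite -(ler_pXn2r (_ : 0 < 2)%N) ?nnegrE ?addr_ge0 ?vnorm2_ge0 //.
rewrite sqrrD !vnorm2_sqr dotDl !dotDr (dotC y x).
have := ler_norm (dot x y); have := normr_dot_le x y; lra.
Qed.

End EuclideanSpace.

Section OperatorNorm.
Variable R : realType.
Implicit Types (n p q : nat).

Let opset n p (A : 'M[R]_(n, p)) :=
  [set vnorm2 (A *m x) | x in [set x : 'cV[R]_p | vnorm2 x <= 1]].

Let opset_has_sup n p (A : 'M[R]_(n, p)) : has_sup (opset A).
Proof.
split; first by exists (vnorm2 (A *m 0)), 0; rewrite //= vnorm2E dot0r sqrtr0.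
pose K := \sum_i dot (row i A)^T (row i A)^T.
have le_K x : dot (A *m x) (A *m x) <= K * dot x x.
  rewrite {1}/dot mulr_suml; apply: ler_sum => i _; rewrite -expr2.
  have -> : (A *m x) i 0 = dot (row i A)^T x.
    by rewrite mxE; apply: eq_bigr => j _; rewrite !mxE.
  exact: dot_sqr_le.
exists (Num.sqrt K) => _ [x /= x_le1 <-].
apply: le_trans (vnorm2_le_sqrt (le_K x)) _.
by rewrite ler_piMr ?sqrtr_ge0.
Qed.

Lemma opnorm2_ge0 n p (A : 'M[R]_(n, p)) : 0 <= opnorm2 A.
Proof.
apply: le_trans (vnorm2_ge0 (A *m 0)) _; apply: (sup_upper_bound (opset_has_sup A)).
by exists 0; rewrite //= vnorm2E dot0r sqrtr0.
Qed.

Lemma opnorm2_mulmx_le n p (A : 'M[R]_(n, p)) x :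
  vnorm2 (A *m x) <= opnorm2 A * vnorm2 x.
Proof.
have [->|x0] := eqVneq x 0; first by rewrite mulmx0 !vnorm2E !dot0r sqrtr0 mulr0.
have nx_gt0 : 0 < vnorm2 x by rewrite lt_def vnorm2_eq0 x0 vnorm2_ge0.
rewrite -ler_pdivrMr // mulrC -[(vnorm2 x)^-1]ger0_norm ?invr_ge0 ?vnorm2_ge0 //.
rewrite -vnorm2Z scalemxAr; apply: (sup_upper_bound (opset_has_sup A)).
by exists ((vnorm2 x)^-1 *: x); rewrite //= vnorm2Z ger0_norm ?invr_ge0 ?vnorm2_ge0 ?mulVf ?gt_eqF.
Qed.

Lemma opnorm2_le n p (A : 'M[R]_(n, p)) s : 0 <= s ->
  (forall x, vnorm2 (A *m x) <= s * vnorm2 x) -> opnorm2 A <= s.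
Proof.
move=> s0 le_s; apply: ge_sup; first by case: (opset_has_sup A).
by move=> _ [x /= x_le1 <-]; apply: le_trans (le_s x) _; rewrite ler_piMr.
Qed.

Lemma opnorm2_mul_le n p q (A : 'M[R]_(n, p)) (B : 'M[R]_(p, q)) :
  opnorm2 (A *m B) <= opnorm2 A * opnorm2 B.
Proof.
apply: opnorm2_le => [|x]; first by rewrite mulr_ge0 ?opnorm2_ge0.
rewrite -mulmxA -mulrA; apply: le_trans (opnorm2_mulmx_le A _) _.
by rewrite ler_wpM2l ?opnorm2_ge0 ?opnorm2_mulmx_le.
Qed.

Lemma opnorm2_prod_le n k (F : 'I_k -> 'M[R]_n) s : 0 <= s ->
  (forall j, opnorm2 (F j) <= s) -> opnorm2 (\prod_(j < k) F j) <= s ^+ k.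
Proof.
move=> s0; elim: k F => [|k IHk] F le_s.
  by rewrite big_ord0 expr0; apply: opnorm2_le => // x; rewrite mul1r mul1mx.
rewrite big_ord_recl exprS; apply: le_trans (opnorm2_mul_le _ _) _.
by rewrite ler_pM ?opnorm2_ge0 ?IHk.
Qed.

Lemma opnorm2_add_scalar_le n (A : 'M[R]_n) a : 0 <= a ->
  opnorm2 (A + a%:M) <= opnorm2 A + a.
Proof.
move=> a0; apply: opnorm2_le => [|x]; first by rewrite addr_ge0 ?opnorm2_ge0.
rewrite mulmxDl mul_scalar_mx mulrDl; apply: le_trans (vnorm2D _ _) _.
by rewrite vnorm2Z ger0_norm // lerD2r opnorm2_mulmx_le.
Qed.

End OperatorNorm.

Section SymmetricMatrices.
Variables (R : realType) (m : nat).
Implicit Types (S T : 'M[R]_m) (x z : 'cV[R]_m).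

Lemma dot_mulmx_le_opnorm2 S x : `|dot x (S *m x)| <= opnorm2 S * dot x x.
Proof.
apply: le_trans (normr_dot_le _ _) _.
by rewrite -vnorm2_sqr expr2 mulrCA ler_wpM2l ?vnorm2_ge0 ?opnorm2_mulmx_le.
Qed.

Lemma psd_dot_mulmx_le T z : T^T = T -> (forall x, 0 <= dot x (T *m x)) ->
  dot (T *m z) (T *m z) <= (1 + opnorm2 T) * dot z (T *m z).
Proof.
move=> T_sym T_psd; set y := T *m z; set K := 1 + opnorm2 T.
have K_gt0 : 0 < K by rewrite ltr_pwDl ?opnorm2_ge0.
have le_yTy : dot y (T *m y) <= K * dot y y.
  apply: le_trans (ler_norm _) (le_trans (dot_mulmx_le_opnorm2 _ _) _).
  by rewrite ler_wpM2r ?dot_ge0 ?lerDr.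
have Tzy : dot z (T *m y) = dot y y by rewrite dot_mulmxr T_sym.
have le_yy : K^-1 * (K^-1 * dot y (T *m y)) <= K^-1 * dot y y.
  by rewrite ler_pM2l ?invr_gt0 // ler_pdivrMl.
have := T_psd (z - K^-1 *: y).
rewrite mulmxBr -scalemxAr !(dotBl, dotBr, dotZl, dotZr) Tzy -/y.
rewrite -ler_pdivrMl //; lra.
Qed.

Lemma dot_mulmx_coercive T z : T \in unitmx ->
  dot z z <= opnorm2 (invmx T) ^+ 2 * dot (T *m z) (T *m z).
Proof.
move=> T_unit; rewrite -!vnorm2_sqr -exprMn.
have le_z := opnorm2_mulmx_le (invmx T) (T *m z); rewrite mulKmx // in le_z.
by rewrite !expr2 ler_pM ?vnorm2_ge0.
Qed.

Lemma dot_normalize x : x != 0 ->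
  dot ((vnorm2 x)^-1 *: x) ((vnorm2 x)^-1 *: x) = 1.
Proof.
move=> x0; rewrite -vnorm2_sqr vnorm2Z ger0_norm ?invr_ge0 ?vnorm2_ge0 //.
by rewrite mulVf ?expr1n ?vnorm2_eq0.
Qed.

Let rayleigh_quotients S := [set dot x (S *m x) | x in [set x | dot x x = 1]].

Definition rayleigh_inf S := inf (rayleigh_quotients S).

Hypothesis m_gt0 : (0 < m)%N.

Let rayleigh_quotients_has_inf S : has_inf (rayleigh_quotients S).
Proof.
split.
  pose e : 'cV[R]_m := const_mx 1.
  have e0 : e != 0.
    by apply/eqP => /matrixP/(_ (Ordinal m_gt0) 0)/eqP; rewrite !mxE oner_eq0.
  by eexists; exists ((vnorm2 e)^-1 *: e); rewrite /= ?dot_normalize.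
exists (- opnorm2 S) => _ [x /= x1 <-].
by have := dot_mulmx_le_opnorm2 S x; rewrite x1 mulr1 ler_norml => /andP[].
Qed.

Lemma rayleigh_inf_le S x : rayleigh_inf S * dot x x <= dot x (S *m x).
Proof.
have [->|x0] := eqVneq x 0; first by rewrite mulmx0 !dot0r mulr0.
set u := (vnorm2 x)^-1 *: x.
have : rayleigh_inf S <= dot u (S *m u).
  by apply: (ge_inf (rayleigh_quotients_has_inf S).2); exists u; rewrite //= dot_normalize.
rewrite /u -scalemxAr dotZl dotZr mulrA -expr2 exprVn vnorm2_sqr => le_mu.
by rewrite -ler_pdivlMr ?dot_gt0 // mulrC.
Qed.

Lemma rayleigh_inf_eigenvalue S : S^T = S -> eigenvalue S (rayleigh_inf S).
Proof.
move=> S_sym; set mu := rayleigh_inf S; set T := S - mu%:M.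
have Tx x : dot x (T *m x) = dot x (S *m x) - mu * dot x x.
  by rewrite mulmxBl mul_scalar_mx dotBr dotZr.
suff /det0P[v v0 vT] : \det T == 0.
  apply/eigenvalueP; exists v => //.
  by apply/eqP; rewrite -subr_eq0 -mul_mx_scalar -mulmxBr vT.
apply: contraT => detT; have T_unit : T \in unitmx by rewrite unitmxE unitfE.
have T_sym : T^T = T by rewrite linearB /= S_sym tr_scalar_mx.
have T_psd x : 0 <= dot x (T *m x) by rewrite Tx subr_ge0 rayleigh_inf_le.
set K := opnorm2 (invmx T) ^+ 2 * (1 + opnorm2 T).
have le_K x : dot x x <= K * dot x (T *m x).
  apply: le_trans (dot_mulmx_coercive x T_unit) _.
  by rewrite /K -mulrA ler_wpM2l ?sqr_ge0 ?psd_dot_mulmx_le.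
have [[_ [x0 /= x01 _]] _] := rayleigh_quotients_has_inf S.
have K_gt0 : 0 < K.
  rewrite lt_def mulr_ge0 ?sqr_ge0 ?addr_ge0 ?opnorm2_ge0 // andbT.
  by apply: contraTneq (le_K x0) => ->; rewrite x01 mul0r ler10.
(* le_K keeps the Rayleigh quotient of S at least K^-1 above its infimum mu *)
have : mu + K^-1 <= mu.
  apply: lb_le_inf; first by case: (rayleigh_quotients_has_inf S).
  move=> _ [x /= x1 <-]; rewrite addrC -lerBrDr -[K^-1]mulr1 ler_pdivrMl //.
  by have := le_K x; rewrite Tx x1 mulr1.
by rewrite gerDl lt_geF ?invr_gt0.
Qed.

Lemma eigenvalue_ge_rayleigh_inf S a :
  S^T = S -> eigenvalue S a -> rayleigh_inf S <= a.
Proof.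
move=> S_sym /eigenvalueP[v vS v0].
have Sv : S *m v^T = a *: v^T by rewrite -{1}S_sym -trmx_mul vS linearZ.
have := rayleigh_inf_le S v^T; rewrite Sv dotZr ler_pM2r // dot_gt0 //.
by rewrite -(inj_eq trmx_inj) trmx0 trmxK.
Qed.

Lemma lambda_min_symE S : S^T = S -> lambda_min S = rayleigh_inf S.
Proof.
move=> S_sym; apply/le_anti/andP; split.
  apply: ge_inf (rayleigh_inf_eigenvalue S_sym).
  by exists (rayleigh_inf S) => a; apply: eigenvalue_ge_rayleigh_inf.
apply: lb_le_inf => [|a]; last exact: eigenvalue_ge_rayleigh_inf.
by exists (rayleigh_inf S); apply: rayleigh_inf_eigenvalue.
Qed.

Lemma lambda_min_sym_part_le (M : 'M[R]_m) x :
  lambda_min (2^-1 *: (M + M^T)) * dot x x <= dot x (M *m x).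
Proof.
have sym : (2^-1 *: (M + M^T))^T = 2^-1 *: (M + M^T).
  by rewrite linearZ /= linearD /= trmxK addrC.
rewrite lambda_min_symE //; apply: le_trans (rayleigh_inf_le _ x) _.
rewrite -scalemxAl dotZr mulmxDl dotDr (dot_mulmxr M^T) trmxK dotC; lra.
Qed.

End SymmetricMatrices.

Section FiniteFamilies.
Variable R : realType.

Let fimage_norm_le (T : finType) (f : T -> R) t :
  - \sum_u `|f u| <= f t <= \sum_u `|f u|.
Proof. by rewrite -ler_norml (bigD1 t) //= lerDl sumr_ge0. Qed.

Lemma fimage_le_sup (T : finType) (f : T -> R) t :
  f t <= sup [set f u | u in [set: T]].
Proof.
apply: sup_upper_bound; last by exists t.
split; first by exists (f t), t.
by exists (\sum_u `|f u|) => _ [u _ <-]; case/andP: (fimage_norm_le f u).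
Qed.

Lemma fimage_inf_le (T : finType) (f : T -> R) t :
  inf [set f u | u in [set: T]] <= f t.
Proof.
apply: ge_inf; last by exists t.
by exists (- \sum_u `|f u|) => _ [u _ <-]; case/andP: (fimage_norm_le f u).
Qed.

Lemma jsr_le (I : finType) m (A : I -> 'M[R]_m) b : 0 <= b ->
  (forall k, sup [set opnorm2 (\prod_(j < k.+1) A (f (rev_ord j))) |
                  f in [set: 'I_k.+1 -> I]] `^ (k.+1%:R)^-1 <= b) ->
  jsr A <= b.
Proof.
move=> b0 le_b; rewrite /jsr; set u := (fun k : nat => _).
(* a divergent sequence has [lim] equal to 0 *)
have [cv|dv] := pselect (cvg (u @ \oo)); last by rewrite dvgP.
by apply: limr_le => //; near=> k; apply: le_b.
Unshelve. all: end_near.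
Qed.

Lemma jsr_le_opnorm2 (I : finType) m (A : I -> 'M[R]_m) (i0 : I) s : 0 <= s ->
  (forall i, opnorm2 (A i) <= s) -> jsr A <= s.
Proof.
move=> s0 le_s; apply: jsr_le => // k.
set E := [set _ | f in _].
have E0 : E (opnorm2 (\prod_(j < k.+1) A i0)) by exists (fun=> i0).
have le_E : ubound E (s ^+ k.+1) by move=> _ [f _ <-]; apply: opnorm2_prod_le.
have E_sup : has_sup E := conj (ex_intro _ _ E0) (ex_intro _ _ le_E).
have supE_le : sup E <= s ^+ k.+1 := ge_sup E_sup.1 le_E.
have supE_ge0 : 0 <= sup E := le_trans (opnorm2_ge0 _) (sup_upper_bound E_sup E0).
apply: le_trans (ge0_ler_powR _ _ _ supE_le) _; rewrite ?invr_ge0 ?nnegrE ?exprn_ge0 //.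
by rewrite -powR_mulrn // -powRrM mulfV ?powRr1 // pnatr_eq0.
Qed.

End FiniteFamilies.

Section Richardson.
Variable R : realType.

Lemma opnorm2_richardson_le m (B : 'M[R]_m) a c l : 0 <= a ->
  (forall x, c * dot x x <= dot x (B *m x)) -> opnorm2 B <= l ->
  opnorm2 (1%:M - a *: B) <= Num.sqrt (1 - 2 * a * c + a ^+ 2 * l ^+ 2).
Proof.
move=> a0 coercive le_l; apply: opnorm2_le => [|x]; first exact: sqrtr_ge0.
apply: vnorm2_le_sqrt.
have -> : (1%:M - a *: B) *m x = x - a *: (B *m x).
  by rewrite mulmxBl mul1mx -scalemxAl.
have le_Bx : dot (B *m x) (B *m x) <= l ^+ 2 * dot x x.
  have : vnorm2 (B *m x) <= l * vnorm2 x.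
    by apply: le_trans (opnorm2_mulmx_le B x) _; rewrite ler_wpM2r ?vnorm2_ge0.
  by rewrite -!vnorm2_sqr -exprMn => ?; rewrite !expr2 ler_pM ?vnorm2_ge0.
rewrite !(dotBl, dotBr, dotZl, dotZr) (dotC (B *m x) x).
have := ler_wpM2l a0 (coercive x); have := ler_wpM2l (sqr_ge0 a) le_Bx; lra.
Qed.

Lemma richardson_rate_lt1 (a c l : R) : 0 < a -> a < 2 * c / l ^+ 2 ->
  Num.sqrt (1 - 2 * a * c + a ^+ 2 * l ^+ 2) < 1.
Proof.
move=> a_gt0 lt_a.
have l0 : l != 0.
  by apply: contraTneq lt_a => ->; rewrite expr0n /= invr0 mulr0 -leNgt ltW.
rewrite ltr_pdivlMr ?exprn_even_gt0 // -(ltr_pM2l a_gt0) mulrA -expr2 in lt_a.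
by rewrite -[X in _ < X]sqrtr1 ltr_sqrt ?ltr01 //; lra.
Qed.

End Richardson.

Unset Implicit Arguments. Set Strict Implicit.

Theorem corollary1 (R : realType) (nS nA m : nat)
  (P : 'M[R]_(nA * nS, nS)) (gamma : R) (Phi : 'M[R]_(nA * nS, m))
  (d : 'rV[R]_(nA * nS)) (alpha : R)
  (hnS : (0 < nS)%N) (hnA : (0 < nA)%N) (hm : (0 < m)%N)
  (hP0 : forall i j, 0 <= P i j)
  (hP1 : forall i, \sum_(j < nS) P i j = 1)
  (hgamma : 0 < gamma < 1)
  (hPhi : \rank Phi = m)
  (hd0 : forall j, 0 < d 0 j)
  (hd1 : \sum_(j < nA * nS) d 0 j = 1)
  (halpha : 0 < alpha < 1) :
  let M := Mpi Phi d P gamma in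
  let c := inf [set lambda_min (2^-1 *: (M pi + (M pi)^T)) | pi in [set: policy nS nA]] in
  let L := sup [set opnorm2 (M pi) | pi in [set: policy nS nA]] in
  forall eta : R, 0 <= eta ->
  let Leta := sup [set opnorm2 (M pi + eta%:M) | pi in [set: policy nS nA]] in
  let rho := jsr (fun pi : policy nS nA => 1%:M - alpha *: (M pi + eta%:M)) in
  [/\ rho <= Num.sqrt (1 - 2 * alpha * (c + eta) + alpha ^+ 2 * Leta ^+ 2),
      Leta <= L + eta,
      rho <= Num.sqrt (1 - 2 * alpha * (c + eta) + alpha ^+ 2 * (L + eta) ^+ 2),
      (0 < c + eta -> alpha < 2 * (c + eta) / Leta ^+ 2 -> rho < 1) &
      (0 < c + eta -> alpha < 2 * (c + eta) / (L + eta) ^+ 2 -> rho < 1)].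
Proof.
move=> M c L eta eta_ge0 Leta rho.
have /andP[alpha_gt0 _] := halpha.
pose pi0 : policy nS nA := [ffun=> Ordinal hnA].
have coercive pi x : (c + eta) * dot x x <= dot x ((M pi + eta%:M) *m x).
  rewrite mulmxDl mul_scalar_mx dotDr dotZr mulrDl lerD2r.
  apply: le_trans (lambda_min_sym_part_le hm (M pi) x).
  by rewrite ler_wpM2r ?dot_ge0 // (fimage_inf_le (fun pi => lambda_min _)).
have rho_le : rho <= Num.sqrt (1 - 2 * alpha * (c + eta) + alpha ^+ 2 * Leta ^+ 2).
  apply: (jsr_le_opnorm2 pi0) => [|pi]; first exact: sqrtr_ge0.
  exact: opnorm2_richardson_le (ltW alpha_gt0) (coercive pi) (fimage_le_sup _ pi).
have Leta_le : Leta <= L + eta.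
  apply: ge_sup => [|_ [pi _ <-]]; first by exists (opnorm2 (M pi0 + eta%:M)), pi0.
  apply: le_trans (opnorm2_add_scalar_le _ eta_ge0) _.
  by rewrite lerD2r (fimage_le_sup (fun pi => opnorm2 (M pi))).
have Leta_ge0 : 0 <= Leta := le_trans (opnorm2_ge0 _) (fimage_le_sup _ pi0).
have rho_le' : rho <= Num.sqrt (1 - 2 * alpha * (c + eta) + alpha ^+ 2 * (L + eta) ^+ 2).
  apply: le_trans rho_le (ler_wsqrtr _).
  by rewrite lerD2l ler_wpM2l ?sqr_ge0 // !expr2 ler_pM.
split=> // _ lt_alpha; [apply: le_lt_trans rho_le _ | apply: le_lt_trans rho_le' _];
  exact: richardson_rate_lt1.
Qed.
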